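(* Let $L\ge1$ and let $\tilde\eta_L:\mathbb{R}^2\to[0,1]$ be a smooth function depending only on $x_2$, with all derivatives bounded, and supported in $\{x\in E:\ x_2>\sqrt L/4\}$ (extended by zero to $x_2<0$). Then for every $\psi\in D(H_b)$, the function $\tilde\eta_L\psi$ (restricted to $E$) lies in $D(H_b^E)$ and $$H_b^E\,\tilde\eta_L\psi=H_b\,\tilde\eta_L\psi.$$
   Context: $E=\mathbb{R}\times[0,\infty)$; $\sigma=(\sigma_1,\sigma_2)$ with Pauli matrices $\sigma_1=\begin{pmatrix}0&1\\1&0\end{pmatrix}$, $\sigma_2=\begin{pmatrix}0&-\mathrm{i}\\ \mathrm{i}&0\end{pmatrix}$; $\tilde A(x)=(-x_2,0)$; $b\ge0$. $H_b$ is the self-adjoint closure of $(-\mathrm{i}\nabla-b\tilde A)\cdot\sigma$ on $C_0^\infty(\mathbb{R}^2,\mathbb{C}^2)$ in $L^2(\mathbb{R}^2,\mathbb{C}^2)$. With $\mathscr S_+$ the restrictions to $E$ of Schwartz functions on $\mathbb{R}^2$ and $\mathscr M=\{\psi=(\psi_1,\psi_2)\in\mathscr S_+\oplus\mathscr S_+:\ \psi_1(x_1,0)=\psi_2(x_1,0)\ \forall x_1,\ \forall\alpha\ \exists c,C>0:\ |\partial^\alpha\psi(x)|\le C\mathrm{e}^{-c|x|}\}$, $H_b^E$ is the closure of $(-\mathrm{i}\nabla-b\tilde A)\cdot\sigma$ on $\mathscr M$ in $L^2(E,\mathbb{C}^2)$. *)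

From mathcomp Require Import all_boot all_order all_algebra.
From mathcomp Require Import all_classical all_reals all_analysis.
From mathcomp Require Import complex.
Import Order.TTheory GRing.Theory Num.Theory.
Import numFieldNormedType.Exports.

Set Implicit Arguments.
Unset Strict Implicit.
Unset Printing Implicit Defensive.

Local Open Scope classical_set_scope.
Local Open Scope ring_scope.
Local Open Scope complex_scope.

Section Dirac.
Variable R : realType.

Definition pt := (R * R)%type.

Definition spinor := pt -> 'cV[R[i]]_2.

Definition dir (j : 'I_2) : pt := if j == ord0 then (1, 0) else (0, 1).

Definition pnorm (x : pt) : R := Num.sqrt (x.1 ^+ 2 + x.2 ^+ 2).

Definition cabs2 (z : R[i]) : R := complex.Re z ^+ 2 + complex.Im z ^+ 2.
Definition snorm2 (v : 'cV[R[i]]_2) : R := \sum_(k < 2) cabs2 (v k ord0).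
Definition snorm (v : 'cV[R[i]]_2) : R := Num.sqrt (snorm2 v).

Definition rpartial (j : 'I_2) (f : pt -> R) : pt -> R :=
  fun x => 'D_(dir j) f x.

(** iterated partial derivative d^alpha, alpha given as a list of directions *)
Fixpoint riter (l : seq 'I_2) (f : pt -> R) : pt -> R :=
  if l is j :: l' then rpartial j (riter l' f) else f.

Definition rsmooth (f : pt -> R) : Prop :=
  forall l : seq 'I_2,
    continuous (riter l f) /\ forall (j : 'I_2) (x : pt), derivable (riter l f) x (dir j).

Definition cpartial (j : 'I_2) (g : pt -> R[i]) : pt -> R[i] :=
  fun x => (rpartial j (fun y => complex.Re (g y)) x)
           +i* (rpartial j (fun y => complex.Im (g y)) x).

Definition spartial (j : 'I_2) (psi : spinor) : spinor :=
  fun x => \col_(k < 2) cpartial j (fun y => psi y k ord0) x.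

Fixpoint siter (l : seq 'I_2) (psi : spinor) : spinor :=
  if l is j :: l' then spartial j (siter l' psi) else psi.

Definition re_comp (psi : spinor) (k : 'I_2) : pt -> R :=
  fun y => complex.Re (psi y k ord0).
Definition im_comp (psi : spinor) (k : 'I_2) : pt -> R :=
  fun y => complex.Im (psi y k ord0).

Definition ssmooth (psi : spinor) : Prop :=
  forall k : 'I_2, rsmooth (re_comp psi k) /\ rsmooth (im_comp psi k).

Definition C0inf (psi : spinor) : Prop :=
  ssmooth psi /\ exists M : R, forall x, M < pnorm x -> psi x = 0.

Definition schwartz (psi : spinor) : Prop :=
  ssmooth psi /\
  forall (l : seq 'I_2) (N : nat), exists C : R,
    forall x, (1 + pnorm x) ^+ N * snorm (siter l psi x) <= C.

Definition Eset : set pt := [set x | 0 <= x.2].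

(** The core M of H_b^E: an element of M is the restriction to E of a pair of
    Schwartz functions S; we quantify over the extension S, whose derivatives
    on E are the (one-sided at the boundary) derivatives of psi = S|_E. *)
Definition coreM (S : spinor) : Prop :=
  schwartz S /\
  (forall x1 : R, S (x1, 0) ord0 ord0 = S (x1, 0) (lift ord0 ord0) ord0) /\
  forall l : seq 'I_2, exists c C : R, 0 < c /\ 0 < C /\
    forall x, Eset x -> snorm (siter l S x) <= C * expR (- c * pnorm x).

Definition imC : R[i] := Complex 0 1.

Definition pauli1 : 'M[R[i]]_2 :=
  \matrix_(i < 2, j < 2) (if i == j then 0 else 1).
Definition pauli2 : 'M[R[i]]_2 :=
  \matrix_(i < 2, j < 2)
     (if i == j then 0 else if i == ord0 then - imC else imC).
Definition pauli (j : 'I_2) : 'M[R[i]]_2 := if j == ord0 then pauli1 else pauli2.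

Definition Atilde (x : pt) : pt := (- x.2, 0).
Definition Acomp (j : 'I_2) (x : pt) : R :=
  if j == ord0 then (Atilde x).1 else (Atilde x).2.

Definition dirac (b : R) (psi : spinor) : spinor :=
  fun x => \sum_(j < 2)
    pauli j *m ((- imC) *: spartial j psi x - (b * Acomp j x)%:C *: psi x).

Definition leb2 := ((@lebesgue_measure R) \x (@lebesgue_measure R))%E.

Definition L2on (D : set pt) (psi : spinor) : Prop :=
  (forall k : 'I_2, measurable_fun D (re_comp psi k) /\ measurable_fun D (im_comp psi k)) /\
  (\int[leb2]_(x in D) (snorm2 (psi x))%:E < +oo)%E.

Definition dist2 (D : set pt) (psi phi : spinor) : \bar R :=
  (\int[leb2]_(x in D) (snorm2 (psi x - phi x))%:E)%E.

(** graph of the closure in L^2(D, C^2) of the operator A defined on core: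
    (psi, phi) is in the graph iff psi, phi in L^2(D) and there is a sequence
    u_n in the core with u_n -> psi and A u_n -> phi in L^2(D). *)
Definition closure_graph (D : set pt) (core : spinor -> Prop)
    (A : spinor -> spinor) (psi phi : spinor) : Prop :=
  L2on D psi /\ L2on D phi /\
  exists u : nat -> spinor, (forall n, core (u n)) /\
    (dist2 D (u n) psi @[n --> \oo] --> 0%E) /\
    (dist2 D (A (u n)) phi @[n --> \oo] --> 0%E).

Definition Hb_graph (b : R) (psi phi : spinor) : Prop :=
  closure_graph setT C0inf (dirac b) psi phi.

(** H_b^E psi = phi (psi in D(H_b^E)), in L^2(E, C^2); only the values of
    psi, phi on E matter *)
Definition HbE_graph (b : R) (psi phi : spinor) : Prop :=
  closure_graph Eset coreM (dirac b) psi phi.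

Definition smul (eta : pt -> R) (psi : spinor) : spinor :=
  fun x => (eta x)%:C *: psi x.

End Dirac.

(* Let u_n in C_0^oo approximate psi in the graph norm of H_b. By Leibniz's rule
   H_b (eta u) = eta H_b u - i (sigma . grad eta) u, and eta and grad eta are bounded, so
   eta u_n -> eta psi and H_b (eta u_n) -> eta phi - i (sigma . grad eta) psi in L^2(R^2).
   Each eta u_n is smooth with compact support and vanishes on the boundary x_2 = 0 (where
   eta vanishes), so it also lies in the core M of H_b^E; restricting the convergence to E
   shows that eta psi is in D(H_b^E) with the same image. *)
From Pilot Require Import Defs.
From mathcomp Require Import all_boot all_order all_algebra.
From mathcomp Require Import all_classical all_reals all_analysis.
From mathcomp Require Import complex lra ring.
From mathcomp Require Import measurable_realfun.
Set Implicit Arguments.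
Unset Strict Implicit.
Unset Printing Implicit Defensive.
Import Order.TTheory GRing.Theory Num.Theory.
Import numFieldNormedType.Exports.
Local Open Scope classical_set_scope.
Local Open Scope ring_scope.

Section Plane.
Variable R : realType.
Local Notation P := (pt R).

Lemma ball_pairP (x y : P) (e : R) :
  ball x e y <-> `|x.1 - y.1| < e /\ `|x.2 - y.2| < e.
Proof. by split=> -[]. Qed.

(* Open sets of the plane are countable unions of rational boxes, hence measurable for the
   product sigma-algebra carried by [pt R]. *)
Definition rat_box (t : rat * rat * rat) : set P :=
  `](ratr t.1.1 - ratr t.2 : R), ratr t.1.1 + ratr t.2[%classic `*`
  `](ratr t.1.2 - ratr t.2 : R), ratr t.1.2 + ratr t.2[%classic.

Lemma open_measurable_pair (U : set P) : open U -> measurable U.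
Proof.
move=> oU.
have -> : U = \bigcup_t (if `[< rat_box t `<=` U >] then rat_box t else set0).
  apply/seteqP; split; last by move=> x [t _]; case: asboolP => // /[apply].
  move=> x Ux; have /nbhs_ballP [e e0 sub] := oU x Ux.
  have [p] : exists p : rat, (ratr p : R) \in `]0, e / 2[.
    by apply: rat_in_itvoo; rewrite divr_gt0.
  rewrite in_itv /= => /andP[p0 pe].
  have [q1] : exists q : rat, (ratr q : R) \in `]x.1 - ratr p, x.1 + ratr p[.
    by apply: rat_in_itvoo; lra.
  rewrite in_itv /= => /andP[q1a q1b].
  have [q2] : exists q : rat, (ratr q : R) \in `]x.2 - ratr p, x.2 + ratr p[.
    by apply: rat_in_itvoo; lra.
  rewrite in_itv /= => /andP[q2a q2b].
  exists (q1, q2, p) => //; case: asboolP => [_|]; last first.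
    apply; move=> y [] /=; rewrite !in_itv /= => /andP[? ?] /andP[? ?].
    by apply: sub; apply/ball_pairP; rewrite !ltr_norml; split; apply/andP; split; lra.
  by split; rewrite /= in_itv /=; apply/andP; split; lra.
apply: countable_bigcupT_measurable => [|t]; first exact: countableP.
by case: ifP => // _; apply: measurableX; exact: measurable_itv.
Qed.

Lemma continuous_measurable_fun_pair (f : P -> R) :
  continuous f -> measurable_fun setT f.
Proof.
move=> /continuousP cf; apply: (measurability _ (RGenOpens.measurableE R)).
move=> _ [_ [a [b ->] <-]]; rewrite setTI; apply: open_measurable_pair.
exact/cf/interval_open.
Qed.

Lemma continuous_pnorm : continuous (@pnorm R).
Proof.
move=> x; apply: continuous_comp; last exact: sqrt_continuous.
by apply: continuousD; apply: continuousM;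
  [exact: cvg_fst|exact: cvg_fst|exact: cvg_snd|exact: cvg_snd].
Qed.

Lemma open_pnorm_gt (M : R) : open [set x : P | M < pnorm x].
Proof.
have -> : [set x : P | M < pnorm x] = @pnorm R @^-1` `]M, +oo[.
  by apply/seteqP; split => x /=; rewrite in_itv /= andbT.
by apply: open_comp => [x _|]; [exact: continuous_pnorm|exact: interval_open].
Qed.

Lemma normr_fst_le_pnorm (x : P) : `|x.1| <= pnorm x.
Proof. by rewrite /pnorm -sqrtr_sqr ler_sqrt ?addr_ge0 ?sqr_ge0 // lerDl sqr_ge0. Qed.

Lemma normr_snd_le_pnorm (x : P) : `|x.2| <= pnorm x.
Proof. by rewrite /pnorm -sqrtr_sqr ler_sqrt ?addr_ge0 ?sqr_ge0 // lerDr sqr_ge0. Qed.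

Lemma continuous_bounded_square (f : P -> R) (M : R) : continuous f ->
  exists B, forall x : P, `|x.1| <= M -> `|x.2| <= M -> `|f x| <= B.
Proof.
move=> cf.
have cK : compact (`[- M, M]%classic `*` `[- M, M]%classic : set P).
  by apply: compact_setX; exact: segment_compact.
have [B [_ hB]] := compact_bounded (continuous_compact (continuous_subspaceT cf) cK).
exists (`|B| + 1) => x h1 h2; apply: (hB (`|B| + 1)).
  by apply: (le_lt_trans (ler_norm B)); rewrite ltrDl.
by exists x => //; split; rewrite /= in_itv /= -ler_norml.
Qed.

End Plane.

Section Smoothness.
Variable R : realType.
Local Notation P := (pt R).

Definition leibniz_sum (s : seq (seq 'I_2 * seq 'I_2)) (f g : P -> R) : P -> R :=
  fun x => \sum_(p <- s) riter p.1 f x * riter p.2 g x.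

Definition leibniz_step (j : 'I_2) (s : seq (seq 'I_2 * seq 'I_2)) :=
  flatten [seq [:: (j :: p.1, p.2); (p.1, j :: p.2)] | p <- s].

Variables f g : P -> R.
Hypotheses (sf : rsmooth f) (sg : rsmooth g).

Lemma leibniz_sum_cons p s :
  leibniz_sum (p :: s) f g = (fun x => riter p.1 f x * riter p.2 g x) + leibniz_sum s f g.
Proof. by apply/funext => x; rewrite /leibniz_sum big_cons. Qed.

Lemma leibniz_sum_nil : leibniz_sum [::] f g = cst 0.
Proof. by apply/funext => x; rewrite /leibniz_sum big_nil. Qed.

Lemma derivable_riterM l m x j :
  derivable (fun y => riter l f y * riter m g y) x (dir R j).
Proof. by apply: derivableM; [exact: (sf l).2|exact: (sg m).2]. Qed.

Lemma derivable_leibniz_sum s x j : derivable (leibniz_sum s f g) x (dir R j).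
Proof.
elim: s => [|p s IH]; first by rewrite leibniz_sum_nil; exact: derivable_cst.
by rewrite leibniz_sum_cons; apply: derivableD; [exact: derivable_riterM|exact: IH].
Qed.

Lemma continuous_leibniz_sum s : continuous (leibniz_sum s f g).
Proof.
elim: s => [|p s IH]; first by rewrite leibniz_sum_nil; exact: cst_continuous.
rewrite leibniz_sum_cons => x; apply: continuousD; last exact: IH.
by apply: continuousM; [exact: (sf p.1).1|exact: (sg p.2).1].
Qed.

Lemma rpartial_leibniz_sum s j :
  rpartial j (leibniz_sum s f g) = leibniz_sum (leibniz_step j s) f g.
Proof.
elim: s => [|p s IH].
  by rewrite leibniz_sum_nil; apply/funext => x; rewrite /rpartial derive_cst.
rewrite /leibniz_step /= -/(leibniz_step j s) !leibniz_sum_cons -IH.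
apply/funext => x; rewrite /rpartial deriveD;
  [|exact: derivable_riterM|exact: derivable_leibniz_sum].
rewrite deriveM; [|exact: (sf p.1).2|exact: (sg p.2).2].
by rewrite /GRing.scale /= !fctE /rpartial; lra.
Qed.

Lemma riterM_leibniz l : exists s, riter l (fun x => f x * g x) = leibniz_sum s f g.
Proof.
elim: l => [|j l [s IH]]; last by exists (leibniz_step j s); rewrite /= IH rpartial_leibniz_sum.
by exists [:: ([::], [::])]; apply/funext => x; rewrite /leibniz_sum big_seq1.
Qed.

Lemma rsmoothM : rsmooth (fun x => f x * g x).
Proof.
move=> l; have [s ->] := riterM_leibniz l.
by split => [|j x]; [exact: continuous_leibniz_sum|exact: derivable_leibniz_sum].
Qed.

End Smoothness.

Lemma riter_eq0_open (R : realType) (U : set (pt R)) (h : pt R -> R) l :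
  open U -> (forall x, U x -> h x = 0) -> forall x, U x -> riter l h x = 0.
Proof.
move=> oU h0; elim: l => [|j l IH] x Ux /=; first exact: h0.
rewrite /rpartial (@near_eq_derive _ _ _ _ (cst 0)) ?derive_cst //.
by apply: filterS (open_nbhs_nbhs (conj oU Ux)) => y Uy; rewrite IH.
Qed.

Section SpinorNorm.
Variable R : realType.
Local Open Scope complex_scope.

Lemma cabs2_ge0 (z : R[i]) : 0 <= cabs2 z.
Proof. by rewrite /cabs2 addr_ge0 // sqr_ge0. Qed.

Lemma cabs2D_le (a b : R[i]) : cabs2 (a + b) <= 2 * cabs2 a + 2 * cabs2 b.
Proof.
case: a b => [a1 a2] [b1 b2]; rewrite /cabs2 /=.
have := sqr_ge0 (a1 - b1); have := sqr_ge0 (a2 - b2); rewrite !expr2; nra.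
Qed.

Lemma cabs2M (a b : R[i]) : cabs2 (a * b) = cabs2 a * cabs2 b.
Proof. by case: a b => [a1 a2] [b1 b2]; rewrite /cabs2 /=; ring. Qed.

Lemma cabs2_real (c : R) : cabs2 c%:C = c ^+ 2.
Proof. by rewrite /cabs2 /=; ring. Qed.

Lemma cabs2_Ni_real (c : R) : cabs2 (- imC R * c%:C) = c ^+ 2.
Proof. by rewrite /cabs2 /=; ring. Qed.

Lemma snorm2E (v : 'cV[R[i]]_2) :
  snorm2 v = cabs2 (v ord0 ord0) + cabs2 (v (lift ord0 ord0) ord0).
Proof. by rewrite /snorm2 big_ord_recl big_ord1. Qed.

Lemma snorm2_ge0 (v : 'cV[R[i]]_2) : 0 <= snorm2 v.
Proof. by rewrite snorm2E addr_ge0 ?cabs2_ge0. Qed.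

Lemma snorm_ge0 (v : 'cV[R[i]]_2) : 0 <= snorm v.
Proof. exact: sqrtr_ge0. Qed.

Lemma snorm0 : snorm (0 : 'cV[R[i]]_2) = 0.
Proof. by rewrite /snorm snorm2E !mxE /cabs2 /= expr2 mul0r !addr0 sqrtr0. Qed.

Lemma snorm2D_le (a b : 'cV[R[i]]_2) : snorm2 (a + b) <= 2 * snorm2 a + 2 * snorm2 b.
Proof.
rewrite !snorm2E !mxE.
have := cabs2D_le (a ord0 ord0) (b ord0 ord0).
have := cabs2D_le (a (lift ord0 ord0) ord0) (b (lift ord0 ord0) ord0).
lra.
Qed.

Lemma snorm2Z (z : R[i]) (a : 'cV[R[i]]_2) : snorm2 (z *: a) = cabs2 z * snorm2 a.
Proof. by rewrite !snorm2E !mxE !cabs2M; ring. Qed.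

Lemma snorm2_pauli j (a : 'cV[R[i]]_2) : snorm2 (pauli R j *m a) = snorm2 a.
Proof.
rewrite !snorm2E !mxE !big_ord_recl !big_ord0 /= !addr0 /pauli.
case: (a ord0 ord0) (a (lift ord0 ord0) ord0) => [a1 a2] [b1 b2].
by case: ifP => _; rewrite /pauli1 /pauli2 !mxE /= /cabs2 /=; ring.
Qed.

End SpinorNorm.

Lemma sqr_le_normr (R : realDomainType) (d K : R) : `|d| <= K -> d ^+ 2 <= K ^+ 2.
Proof. by move=> h; rewrite -real_normK ?num_real // lerXn2r ?nnegrE // (le_trans _ h). Qed.

Section Components.
Variable R : realType.
Local Notation P := (pt R).
Local Open Scope complex_scope.

Lemma cV2_entryE (v : 'cV[R[i]]_2) k :
  v k ord0 = (complex.Re (v k ord0)) +i* (complex.Im (v k ord0)).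
Proof. by case: (v k ord0). Qed.

Lemma re_comp_smul (eta : P -> R) (u : spinor R) k :
  re_comp (smul eta u) k = fun y => eta y * re_comp u k y.
Proof. by apply/funext => y; rewrite /re_comp /smul mxE; case: (u y k ord0) => ? ? /=; ring. Qed.

Lemma im_comp_smul (eta : P -> R) (u : spinor R) k :
  im_comp (smul eta u) k = fun y => eta y * im_comp u k y.
Proof. by apply/funext => y; rewrite /im_comp /smul mxE; case: (u y k ord0) => ? ? /=; ring. Qed.

Lemma re_comp_siter l (u : spinor R) k : re_comp (siter l u) k = riter l (re_comp u k).
Proof. by elim: l => [|j l IH] //=; rewrite -IH; apply/funext => y; rewrite /re_comp mxE. Qed.

Lemma im_comp_siter l (u : spinor R) k : im_comp (siter l u) k = riter l (im_comp u k).
Proof. by elim: l => [|j l IH] //=; rewrite -IH; apply/funext => y; rewrite /im_comp mxE. Qed.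

Lemma ssmooth_smul (eta : P -> R) (u : spinor R) :
  rsmooth eta -> ssmooth u -> ssmooth (smul eta u).
Proof.
move=> se su k; rewrite re_comp_smul im_comp_smul.
by split; apply: rsmoothM; [exact: se|exact: (su k).1|exact: se|exact: (su k).2].
Qed.

Lemma spartial_smul j (eta : P -> R) (u : spinor R) (x : P) :
  rsmooth eta -> ssmooth u ->
  spartial j (smul eta u) x =
  (rpartial j eta x)%:C *: u x + (eta x)%:C *: spartial j u x.
Proof.
move=> se su; apply/matrixP => k c; rewrite (ord1 c) !mxE /cpartial.
rewrite -[fun y => complex.Re _]/(re_comp _ k) -[fun y => complex.Im _]/(im_comp _ k).
rewrite -[fun y => complex.Re _]/(re_comp _ k) -[fun y => complex.Im _]/(im_comp _ k).
rewrite re_comp_smul im_comp_smul /rpartial.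
rewrite deriveM; [|exact: ((se [::]).2 j x)|exact: (((su k).1 [::]).2 j x)].
rewrite deriveM; [|exact: ((se [::]).2 j x)|exact: (((su k).2 [::]).2 j x)].
rewrite [u x k ord0]cV2_entryE /re_comp /im_comp /GRing.scale /=.
by apply/eqP; rewrite eq_complex /=; apply/andP; split; apply/eqP; ring.
Qed.

End Components.

Section DiracLeibniz.
Variable R : realType.
Local Notation P := (pt R).
Local Open Scope complex_scope.

Definition dirac_commutator (eta : P -> R) (u : spinor R) : spinor R := fun x =>
  \sum_(j < 2) (- imC R * (rpartial j eta x)%:C) *: (pauli R j *m u x).

(* [H_b (eta psi)] when [H_b psi = phi]. *)
Definition smul_dirac (eta : P -> R) (psi phi : spinor R) : spinor R := fun x =>
  (eta x)%:C *: phi x + dirac_commutator eta psi x.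

(* Stated over an abstract ring: [ring] is far slower on the concrete [R[i]]. *)
Lemma mulmx_leibniz (T : comNzRingType) (S : 'I_2 -> 'M[T]_2) (m e : T)
    (d a : 'I_2 -> T) (U : 'cV[T]_2) (dU : 'I_2 -> 'cV[T]_2) :
  \sum_(j < 2) S j *m (m *: (d j *: U + e *: dU j) - a j *: (e *: U)) =
  e *: \sum_(j < 2) S j *m (m *: dU j - a j *: U) + \sum_(j < 2) (m * d j) *: (S j *m U).
Proof. by apply/matrixP => k c; rewrite !(mxE, summxE, big_ord_recl, big_ord0); ring. Qed.

Lemma dirac_smul (b : R) (eta : P -> R) (u : spinor R) (x : P) :
  rsmooth eta -> ssmooth u ->
  Defs.dirac b (smul eta u) x = (eta x)%:C *: Defs.dirac b u x + dirac_commutator eta u x.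
Proof.
move=> se su; rewrite /Defs.dirac /dirac_commutator /smul.
under eq_bigr => j _ do rewrite spartial_smul //.
exact: mulmx_leibniz.
Qed.

Lemma dirac_commutatorB (eta : P -> R) (u v : spinor R) (x : P) :
  dirac_commutator eta (fun y => u y - v y) x =
  dirac_commutator eta u x - dirac_commutator eta v x.
Proof.
by rewrite /dirac_commutator -sumrB; apply: eq_bigr => j _; rewrite mulmxBr scalerBr.
Qed.

Lemma dirac_smul_sub (b : R) (eta : P -> R) (u psi phi : spinor R) (x : P) :
  rsmooth eta -> ssmooth u ->
  Defs.dirac b (smul eta u) x - smul_dirac eta psi phi x =
  (eta x)%:C *: (Defs.dirac b u x - phi x) + dirac_commutator eta (fun y => u y - psi y) x.
Proof.
move=> se su; rewrite dirac_smul // dirac_commutatorB /smul_dirac scalerBr.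
by rewrite opprD !addrA; congr (_ + _); rewrite -!addrA; congr (_ + _); rewrite addrC.
Qed.

End DiracLeibniz.

Section Measurability.
Variable R : realType.
Local Notation P := (pt R).
Local Open Scope complex_scope.

Definition cmeasurable (z : P -> R[i]) :=
  measurable_fun setT (fun x => complex.Re (z x)) /\
  measurable_fun setT (fun x => complex.Im (z x)).

Definition smeasurable (v : spinor R) :=
  forall k : 'I_2, cmeasurable (fun x => v x k ord0).

Lemma cmeasurableD z w : cmeasurable z -> cmeasurable w -> cmeasurable (fun x => z x + w x).
Proof.
move=> [z1 z2] [w1 w2]; split.
- rewrite (_ : (fun x => _) = (fun x => complex.Re (z x)) \+ (fun x => complex.Re (w x))).
    exact: measurable_funD.
  by apply/funext => x /=; case: (z x); case: (w x).
- rewrite (_ : (fun x => _) = (fun x => complex.Im (z x)) \+ (fun x => complex.Im (w x))).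
    exact: measurable_funD.
  by apply/funext => x /=; case: (z x); case: (w x).
Qed.

Lemma cmeasurableM z w : cmeasurable z -> cmeasurable w -> cmeasurable (fun x => z x * w x).
Proof.
move=> [z1 z2] [w1 w2]; split.
- rewrite (_ : (fun x => _) =
    ((fun x => complex.Re (z x)) \* (fun x => complex.Re (w x))) \-
    ((fun x => complex.Im (z x)) \* (fun x => complex.Im (w x)))).
    by apply: measurable_funB; apply: measurable_funM.
  by apply/funext => x /=; case: (z x); case: (w x).
- rewrite (_ : (fun x => _) =
    ((fun x => complex.Re (z x)) \* (fun x => complex.Im (w x))) \+
    ((fun x => complex.Im (z x)) \* (fun x => complex.Re (w x)))).
    by apply: measurable_funD; apply: measurable_funM.
  by apply/funext => x /=; case: (z x); case: (w x).
Qed.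

Lemma cmeasurable_cst c : cmeasurable (fun _ => c).
Proof. by split; exact: measurable_cst. Qed.

Lemma cmeasurable_real (f : P -> R) : measurable_fun setT f -> cmeasurable (fun x => (f x)%:C).
Proof. by move=> mf; split => //=; exact: measurable_cst. Qed.

Lemma smeasurableD v w : smeasurable v -> smeasurable w -> smeasurable (fun x => v x + w x).
Proof.
move=> hv hw k; rewrite (_ : (fun x => _) = fun x => v x k ord0 + w x k ord0).
  exact: cmeasurableD.
by apply/funext => x; rewrite mxE.
Qed.

Lemma smeasurableZ z v : cmeasurable z -> smeasurable v -> smeasurable (fun x => z x *: v x).
Proof.
move=> hz hv k; rewrite (_ : (fun x => _) = fun x => z x * v x k ord0).
  exact: cmeasurableM.
by apply/funext => x; rewrite mxE.
Qed.

Lemma smeasurableB v w : smeasurable v -> smeasurable w -> smeasurable (fun x => v x - w x).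
Proof.
move=> hv hw; under eq_fun do rewrite -scaleN1r.
by apply: smeasurableD => //; apply: smeasurableZ => //; exact: cmeasurable_cst.
Qed.

Lemma smeasurable_mulmx (M : 'M[R[i]]_2) v : smeasurable v -> smeasurable (fun x => M *m v x).
Proof.
move=> hv k; rewrite (_ : (fun x => _) =
   fun x => M k ord0 * v x ord0 ord0 + M k (lift ord0 ord0) * v x (lift ord0 ord0) ord0).
  by apply: cmeasurableD; apply: cmeasurableM => //; exact: cmeasurable_cst.
by apply/funext => x; rewrite mxE big_ord_recl big_ord1.
Qed.

Lemma smeasurable_sum2 (F : 'I_2 -> spinor R) :
  (forall j, smeasurable (F j)) -> smeasurable (fun x => \sum_(j < 2) F j x).
Proof.
move=> hF; under eq_fun do rewrite big_ord_recl big_ord1.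
exact: smeasurableD.
Qed.

Lemma measurable_snorm2 v : smeasurable v -> measurable_fun setT (fun x => snorm2 (v x)).
Proof.
move=> hv; rewrite /snorm2; under eq_fun do rewrite big_ord_recl big_ord1 /cabs2.
have [h1 h2] := hv ord0; have [h3 h4] := hv (lift ord0 ord0).
by repeat apply: measurable_funD; apply: measurable_funX.
Qed.

Lemma smeasurable_siter (u : spinor R) l : ssmooth u -> smeasurable (siter l u).
Proof.
move=> su k; split; apply: continuous_measurable_fun_pair.
- by rewrite -[fun x => _]/(re_comp _ k) re_comp_siter; exact: ((su k).1 l).1.
- by rewrite -[fun x => _]/(im_comp _ k) im_comp_siter; exact: ((su k).2 l).1.
Qed.

Lemma smeasurable_smul (eta : P -> R) v : measurable_fun setT eta -> smeasurable v ->
  smeasurable (smul eta v).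
Proof. by move=> me hv; apply: smeasurableZ => //; exact: cmeasurable_real. Qed.

Lemma smeasurable_dirac (b : R) (u : spinor R) : ssmooth u -> smeasurable (Defs.dirac b u).
Proof.
move=> su; apply: smeasurable_sum2 => j; apply: smeasurable_mulmx; apply: smeasurableB.
  by apply: smeasurableZ; [exact: cmeasurable_cst|exact: (smeasurable_siter [:: j] su)].
apply: smeasurableZ; last exact: (smeasurable_siter [::] su).
apply: cmeasurable_real; rewrite /Acomp; case: (j == ord0) => /=.
  by apply: measurable_funM => //; apply: measurable_funN; exact: measurable_snd.
by apply: measurable_funM => //; exact: measurable_cst.
Qed.

Lemma smeasurable_smul_dirac (eta : P -> R) psi phi : rsmooth eta ->
  smeasurable psi -> smeasurable phi -> smeasurable (smul_dirac eta psi phi).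
Proof.
move=> se hpsi hphi; have meta := continuous_measurable_fun_pair (se [::]).1.
apply: smeasurableD; first exact: smeasurable_smul.
apply: smeasurable_sum2 => j; apply: smeasurableZ; last exact: smeasurable_mulmx.
apply: cmeasurableM; first exact: cmeasurable_cst.
by apply: cmeasurable_real; exact: continuous_measurable_fun_pair (se [:: j]).1.
Qed.

End Measurability.

Section Integrals.
Variable R : realType.
Local Notation P := (pt R).
Local Open Scope ereal_scope.

Lemma ge0_integral_le_comb (D : set P) (mD : measurable D) (F G H : P -> R) (a c : R) :
  (0 <= a)%R -> (0 <= c)%R ->
  measurable_fun D F -> measurable_fun D G -> measurable_fun D H ->
  (forall x, 0 <= F x)%R -> (forall x, 0 <= G x)%R -> (forall x, 0 <= H x)%R ->
  (forall x, D x -> F x <= a * G x + c * H x)%R ->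
  \int[@leb2 R]_(x in D) (F x)%:E <=
    a%:E * \int[@leb2 R]_(x in D) (G x)%:E + c%:E * \int[@leb2 R]_(x in D) (H x)%:E.
Proof.
move=> a0 c0 mF mG mH F0 G0 H0 FGH.
have mG' : measurable_fun D (EFin \o G) by apply/measurable_EFinP.
have mH' : measurable_fun D (EFin \o H) by apply/measurable_EFinP.
have maG : measurable_fun D (fun x => a%:E * (G x)%:E).
  by apply: emeasurable_funM => //; exact: measurable_cst.
have mcH : measurable_fun D (fun x => c%:E * (H x)%:E).
  by apply: emeasurable_funM => //; exact: measurable_cst.
rewrite -ge0_integralZl_EFin //; last by move=> x _; rewrite lee_fin.
rewrite -[X in _ <= _ + X]ge0_integralZl_EFin //; last by move=> x _; rewrite lee_fin.
rewrite -ge0_integralD //; try by move=> x _; rewrite -EFinM lee_fin mulr_ge0.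
apply: ge0_le_integral => //; try exact/measurable_EFinP; try exact: emeasurable_funD.
all: by move=> x Dx; rewrite -?EFinM -?EFinD lee_fin ?FGH ?addr_ge0 ?mulr_ge0.
Qed.

Lemma cvge_le_comb (A B C : nat -> \bar R) (a c : R) :
  (0 <= a)%R -> (0 <= c)%R -> (forall n, 0 <= A n) ->
  (forall n, A n <= a%:E * B n + c%:E * C n) ->
  B n @[n --> \oo] --> 0 -> C n @[n --> \oo] --> 0 -> A n @[n --> \oo] --> 0.
Proof.
move=> a0 c0 A0 ABC hB hC.
apply: (@squeeze_cvge _ _ _ _ (fun=> 0) _ (fun n => a%:E * B n + c%:E * C n)).
- by near=> n; rewrite A0 ABC.
- exact: cvg_cst.
- have := cvgeD _ (cvgeZl (y := a%:E) _ hB) (cvgeZl (y := c%:E) _ hC).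
  by rewrite !mule0 adde0; apply.
Unshelve. all: by end_near.
Qed.

Lemma dist2_ge0 (D : set P) (v w : spinor R) : 0 <= dist2 D v w.
Proof. by apply: integral_ge0 => x _; rewrite lee_fin snorm2_ge0. Qed.

Lemma L2on_le_comb (w v v' : spinor R) (a c : R) : (0 <= a)%R -> (0 <= c)%R ->
  smeasurable w -> L2on setT v -> L2on setT v' ->
  (forall x, snorm2 (w x) <= a * snorm2 (v x) + c * snorm2 (v' x))%R -> L2on setT w.
Proof.
move=> a0 c0 hw [mv iv] [mv' iv'] bnd; split=> [k|]; first exact: hw.
have hv : smeasurable v by move=> k; exact: mv.
have hv' : smeasurable v' by move=> k; exact: mv'.
have fin_int (f : spinor R) : \int[@leb2 R]_(x in setT) (snorm2 (f x))%:E < +oo ->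
    \int[@leb2 R]_(x in setT) (snorm2 (f x))%:E \is a fin_num.
  by move=> ?; rewrite ge0_fin_numE // integral_ge0 // => x _; rewrite lee_fin snorm2_ge0.
apply: le_lt_trans (ge0_integral_le_comb measurableT a0 c0 (measurable_snorm2 hw)
  (measurable_snorm2 hv) (measurable_snorm2 hv') (fun x => snorm2_ge0 _)
  (fun x => snorm2_ge0 _) (fun x => snorm2_ge0 _) (fun x _ => bnd x)) _.
by rewrite -(fineK (fin_int _ iv)) -(fineK (fin_int _ iv')) -!EFinM -EFinD ltry.
Qed.

End Integrals.

Section L2Convergence.
Variable R : realType.
Local Notation P := (pt R).
Local Open Scope ereal_scope.

Lemma cvg_dist2_le_comb (F G H : nat -> spinor R) (f g h : spinor R) (a c : R) :
  (0 <= a)%R -> (0 <= c)%R ->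
  (forall n, smeasurable (F n)) -> smeasurable f -> (forall n, smeasurable (G n)) ->
  smeasurable g -> (forall n, smeasurable (H n)) -> smeasurable h ->
  (forall n x, snorm2 (F n x - f x) <= a * snorm2 (G n x - g x) + c * snorm2 (H n x - h x))%R ->
  dist2 setT (G n) g @[n --> \oo] --> 0 -> dist2 setT (H n) h @[n --> \oo] --> 0 ->
  dist2 setT (F n) f @[n --> \oo] --> 0.
Proof.
move=> a0 c0 hF hf hG hg hH hh bnd cG cH.
apply: (cvge_le_comb a0 c0 (fun n => dist2_ge0 _ _ _) _ cG cH) => n.
apply: ge0_integral_le_comb => //.
all: try by move=> x; exact: snorm2_ge0.
all: try by move=> x _; exact: bnd.
all: by apply: measurable_snorm2; exact: smeasurableB.
Qed.

Lemma measurable_Eset : measurable (@Eset R).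
Proof.
rewrite (_ : @Eset R = setT `*` `[0%R, +oo[%classic).
  by apply: measurableX => //; exact: measurable_itv.
by apply/seteqP; split => x; rewrite /Eset /= in_itv /= andbT // => -[].
Qed.

Lemma L2on_Eset (w : spinor R) : L2on setT w -> L2on (@Eset R) w.
Proof.
move=> [mw iw]; split=> [k|].
  by have [m1 m2] := mw k; split; exact: measurable_funS m1 || exact: measurable_funS m2.
apply: le_lt_trans iw; apply: ge0_subset_integral => //; first exact: measurable_Eset.
- by apply/measurable_EFinP; apply: measurable_snorm2 => k; exact: mw.
- by move=> x _; rewrite lee_fin snorm2_ge0.
Qed.

Lemma cvg_dist2_Eset (U : nat -> spinor R) (w : spinor R) :
  (forall n, smeasurable (U n)) -> smeasurable w ->
  dist2 setT (U n) w @[n --> \oo] --> 0 -> dist2 (@Eset R) (U n) w @[n --> \oo] --> 0.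
Proof.
move=> hU hw c; apply: (cvge_le_comb ler01 (lexx 0) _ _ c c) => n.
  exact: dist2_ge0.
rewrite mul0e adde0 mul1e; apply: ge0_subset_integral => //; first exact: measurable_Eset.
- by apply/measurable_EFinP; apply: measurable_snorm2; exact: smeasurableB.
- by move=> x _; rewrite lee_fin snorm2_ge0.
Qed.

End L2Convergence.

Section CompactSupport.
Variable R : realType.
Local Notation P := (pt R).
Local Open Scope complex_scope.

Definition supported_in_ball (M : R) (v : spinor R) := forall x, M < pnorm x -> v x = 0.

Lemma supported_in_ball_siter (M : R) (v : spinor R) l :
  supported_in_ball M v -> supported_in_ball M (siter l v).
Proof.
move=> hv x hx; apply/matrixP => k c; rewrite (ord1 c) [LHS]cV2_entryE mxE.
have re0 : re_comp (siter l v) k x = 0.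
  rewrite re_comp_siter; apply: (riter_eq0_open l (@open_pnorm_gt R M) _ hx) => y hy.
  by rewrite /re_comp hv // mxE.
have im0 : im_comp (siter l v) k x = 0.
  rewrite im_comp_siter; apply: (riter_eq0_open l (@open_pnorm_gt R M) _ hx) => y hy.
  by rewrite /im_comp hv // mxE.
by move: re0 im0; rewrite /re_comp /im_comp => -> ->.
Qed.

Lemma continuous_snorm2 (w : spinor R) :
  (forall k, continuous (re_comp w k) /\ continuous (im_comp w k)) ->
  continuous (fun y => snorm2 (w y)).
Proof.
move=> cw; have c k : continuous (fun y => cabs2 (w y k ord0)).
  have [cre cim] := cw k => x.
  exact: continuousD (continuousM (cre x) (cre x)) (continuousM (cim x) (cim x)).
rewrite (_ : (fun y => _) =
    fun y => cabs2 (w y ord0 ord0) + cabs2 (w y (lift ord0 ord0) ord0)).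
  by move=> x; exact: continuousD (c _ x) (c _ x).
by apply/funext => y; rewrite snorm2E.
Qed.

Lemma continuous_snorm_siter (v : spinor R) l : ssmooth v ->
  continuous (fun x => snorm (siter l v x)).
Proof.
move=> sv; have c2 : continuous (fun y => snorm2 (siter l v y)).
  apply: continuous_snorm2 => k; rewrite re_comp_siter im_comp_siter.
  by split; [exact: ((sv k).1 l).1|exact: ((sv k).2 l).1].
by rewrite /snorm => x; apply: continuous_comp; [exact: c2|exact: sqrt_continuous].
Qed.

Lemma outside_square_lt_pnorm (x : P) (m : R) :
  ~ (`|x.1| <= m /\ `|x.2| <= m) -> m < pnorm x.
Proof.
move=> out; have [h1|h1] := ltP m `|x.1|; first exact: lt_le_trans h1 (normr_fst_le_pnorm x).
have [h2|h2] := ltP m `|x.2|; first exact: lt_le_trans h2 (normr_snd_le_pnorm x).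
by case: out.
Qed.

Lemma siter_bounded (M : R) (v : spinor R) l : ssmooth v -> supported_in_ball M v ->
  exists S, 0 <= S /\ forall x, snorm (siter l v x) <= S.
Proof.
move=> sv hv.
have [B hB] := continuous_bounded_square `|M| (continuous_snorm_siter (l := l) sv).
have B0 : 0 <= B by apply: le_trans (hB 0 _ _); rewrite ?normr0.
exists B; split=> // x.
have [[h1 h2]|out] := pselect (`|x.1| <= `|M| /\ `|x.2| <= `|M|).
  by apply: le_trans (hB x h1 h2); exact: ler_norm.
rewrite (supported_in_ball_siter l hv) ?snorm0 //.
exact: le_lt_trans (ler_norm M) (outside_square_lt_pnorm out).
Qed.

Lemma C0inf_schwartz (v : spinor R) : C0inf v -> schwartz v.
Proof.
move=> [sv [M hv]]; split=> // l N; have [S [S0 hS]] := siter_bounded l sv hv.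
exists ((1 + `|M|) ^+ N * S) => x; have p0 : 0 <= 1 + pnorm x by rewrite addr_ge0 ?sqrtr_ge0.
have [xM|Mx] := lerP (pnorm x) M; last first.
  by rewrite (supported_in_ball_siter l hv) // snorm0 mulr0 mulr_ge0 ?exprn_ge0 ?addr_ge0.
apply: ler_pM; rewrite ?exprn_ge0 ?snorm_ge0 ?hS //.
apply: lerXn2r; rewrite ?nnegrE ?addr_ge0 ?sqrtr_ge0 //.
by apply: lerD => //; exact: le_trans xM (ler_norm M).
Qed.

Lemma C0inf_exp_decay (v : spinor R) l : C0inf v ->
  exists c C : R, 0 < c /\ 0 < C /\
    forall x, snorm (siter l v x) <= C * expR (- c * pnorm x).
Proof.
move=> [sv [M hv]]; have [S [S0 hS]] := siter_bounded l sv hv.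
exists 1, (S * expR `|M| + 1); split=> //; split=> [|x].
  by rewrite ltr_wpDl // mulr_ge0 // expR_ge0.
have e0 : 0 < expR (- 1 * pnorm x) := expR_gt0 _.
have [xM|Mx] := lerP (pnorm x) M; last first.
  rewrite (supported_in_ball_siter l hv) // snorm0; apply: mulr_ge0 _ (ltW e0).
  by rewrite addr_ge0 // mulr_ge0 // expR_ge0.
have e1 : 1 <= expR `|M| * expR (- 1 * pnorm x).
  rewrite -expRD; apply: le_trans (expR_ge1Dx _).
  by rewrite lerDl mulN1r subr_ge0 (le_trans xM (ler_norm M)).
apply: (le_trans (hS x)); rewrite mulrDl mul1r -mulrA.
have : S <= S * (expR `|M| * expR (- 1 * pnorm x)) by rewrite ler_peMr.
lra.
Qed.

End CompactSupport.

Section PointwiseBounds.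
Variable R : realType.
Local Notation P := (pt R).
Local Open Scope complex_scope.

Lemma smulB (eta : P -> R) (v w : spinor R) x :
  smul eta v x - smul eta w x = smul eta (fun y => v y - w y) x.
Proof. by rewrite /smul scalerBr. Qed.

Lemma snorm2_smul_le (eta : P -> R) (K : R) (v : spinor R) x :
  `|eta x| <= K -> snorm2 (smul eta v x) <= K ^+ 2 * snorm2 (v x).
Proof. by move=> hK; rewrite /smul snorm2Z cabs2_real ler_wpM2r ?snorm2_ge0 ?sqr_le_normr. Qed.

Lemma snorm2_dirac_commutator_le (eta : P -> R) (w : spinor R) x :
  snorm2 (dirac_commutator eta w x) <=
  2 * (\sum_(j < 2) rpartial j eta x ^+ 2) * snorm2 (w x).
Proof.
rewrite /dirac_commutator big_ord_recl big_ord1 big_ord_recl big_ord1.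
apply: le_trans (snorm2D_le _ _) _.
by rewrite !snorm2Z !cabs2_Ni_real !snorm2_pauli; lra.
Qed.

Lemma snorm2_smul_dirac_le (eta : P -> R) (K G : R) (A : 'cV[R[i]]_2) (w : spinor R) x :
  `|eta x| <= K -> \sum_(j < 2) rpartial j eta x ^+ 2 <= G ->
  snorm2 ((eta x)%:C *: A + dirac_commutator eta w x) <=
  2 * K ^+ 2 * snorm2 A + 4 * G * snorm2 (w x).
Proof.
move=> hK hG; apply: le_trans (snorm2D_le _ _) _.
have hA : snorm2 ((eta x)%:C *: A) <= K ^+ 2 * snorm2 A := snorm2_smul_le (fun=> A) hK.
have hw : 2 * (\sum_(j < 2) rpartial j eta x ^+ 2) * snorm2 (w x) <= 2 * G * snorm2 (w x).
  by rewrite ler_wpM2r ?snorm2_ge0 // ler_wpM2l.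
have := snorm2_dirac_commutator_le eta w x; lra.
Qed.

End PointwiseBounds.

Section ClosureGraph.
Variable R : realType.
Local Notation P := (pt R).
Local Open Scope complex_scope.

Lemma closure_graph_sub_core (D : set P) (core core' : spinor R -> Prop)
    (A : spinor R -> spinor R) psi phi :
  (forall u, core u -> core' u) ->
  closure_graph D core A psi phi -> closure_graph D core' A psi phi.
Proof.
by move=> sub [Lpsi [Lphi [u [cu lim]]]]; do 2 split=> //; exists u; split=> // n; exact: sub.
Qed.

Lemma closure_graph_Eset (core : spinor R -> Prop) (A : spinor R -> spinor R) psi phi :
  (forall u, core u -> smeasurable u /\ smeasurable (A u)) ->
  closure_graph setT core A psi phi -> closure_graph (@Eset R) core A psi phi.
Proof.
move=> hA [Lpsi [Lphi [u [cu [c1 c2]]]]]; split; first exact: L2on_Eset.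
split; first exact: L2on_Eset.
exists u; split; first exact: cu.
split.
- by apply: (cvg_dist2_Eset _ _ c1) => [n|]; [case: (hA _ (cu n))|exact: Lpsi.1].
- by apply: (cvg_dist2_Eset _ _ c2) => [n|]; [case: (hA _ (cu n))|exact: Lphi.1].
Qed.

Section Cutoff.
Variables (eta : P -> R) (K G : R).
Hypotheses (se : rsmooth eta) (hK : forall x, `|eta x| <= K)
  (hG : forall x, \sum_(j < 2) rpartial j eta x ^+ 2 <= G).

Let meta : measurable_fun setT eta := continuous_measurable_fun_pair (se [::]).1.

Let K2_ge0 : 0 <= 2 * K ^+ 2. Proof. by rewrite mulr_ge0 // sqr_ge0. Qed.

Let G4_ge0 : 0 <= 4 * G.
Proof. by rewrite mulr_ge0 // (le_trans _ (hG 0)) // sumr_ge0 // => j _; exact: sqr_ge0. Qed.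

Lemma L2on_smul psi : L2on setT psi -> L2on setT (smul eta psi).
Proof.
move=> Lpsi; apply: (L2on_le_comb (sqr_ge0 K) (lexx 0) _ Lpsi Lpsi) => [|x].
  exact: smeasurable_smul meta Lpsi.1.
by rewrite mul0r addr0; exact: snorm2_smul_le.
Qed.

Lemma L2on_smul_dirac psi phi :
  L2on setT psi -> L2on setT phi -> L2on setT (smul_dirac eta psi phi).
Proof.
move=> Lpsi Lphi; apply: (L2on_le_comb K2_ge0 G4_ge0 _ Lphi Lpsi) => [|x].
  exact: smeasurable_smul_dirac se Lpsi.1 Lphi.1.
exact: snorm2_smul_dirac_le (hK x) (hG x).
Qed.

Lemma cvg_dist2_smul (u : nat -> spinor R) psi :
  (forall n, smeasurable (u n)) -> smeasurable psi ->
  (dist2 setT (u n) psi @[n --> \oo] --> 0)%E ->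
  (dist2 setT (smul eta (u n)) (smul eta psi) @[n --> \oo] --> 0)%E.
Proof.
move=> mu mpsi cu; have mv n := smeasurable_smul meta (mu n).
apply: (cvg_dist2_le_comb (sqr_ge0 K) (lexx 0) mv _ mu mpsi mu mpsi _ cu cu) => [|n x].
  exact: smeasurable_smul.
by rewrite mul0r addr0 smulB; exact: snorm2_smul_le.
Qed.

Lemma cvg_dist2_dirac_smul (b : R) (u : nat -> spinor R) psi phi :
  (forall n, ssmooth (u n)) -> smeasurable psi -> smeasurable phi ->
  (dist2 setT (u n) psi @[n --> \oo] --> 0)%E ->
  (dist2 setT (Defs.dirac b (u n)) phi @[n --> \oo] --> 0)%E ->
  (dist2 setT (Defs.dirac b (smul eta (u n))) (smul_dirac eta psi phi) @[n --> \oo] --> 0)%E.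
Proof.
move=> su mpsi mphi cu cdu.
have mu n := smeasurable_siter [::] (su n).
have mdu n := smeasurable_dirac b (su n).
have mdv n := smeasurable_dirac b (ssmooth_smul se (su n)).
apply: (cvg_dist2_le_comb K2_ge0 G4_ge0 mdv _ mdu mphi mu mpsi _ cdu cu) => [|n x].
  exact: smeasurable_smul_dirac.
rewrite dirac_smul_sub //; exact: snorm2_smul_dirac_le (hK x) (hG x).
Qed.

Lemma closure_graph_smul (b : R) (core : spinor R -> Prop) psi phi :
  (forall u, C0inf u -> core (smul eta u)) -> Hb_graph b psi phi ->
  closure_graph setT core (Defs.dirac b) (smul eta psi) (smul_dirac eta psi phi).
Proof.
move=> hcore [Lpsi [Lphi [u [Cu [cu cdu]]]]].
have su n : ssmooth (u n) := (Cu n).1.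
split; first exact: L2on_smul.
split; first exact: L2on_smul_dirac.
exists (fun n => smul eta (u n)); split=> [n|]; first exact: hcore.
split; first exact: cvg_dist2_smul (fun n => smeasurable_siter [::] (su n)) Lpsi.1 cu.
exact: cvg_dist2_dirac_smul su Lpsi.1 Lphi.1 cu cdu.
Qed.

End Cutoff.

Lemma C0inf_smul (eta : P -> R) (u : spinor R) :
  rsmooth eta -> C0inf u -> C0inf (smul eta u).
Proof.
move=> se [su [M hu]]; split; first exact: ssmooth_smul.
by exists M => x hx; rewrite /smul hu // scaler0.
Qed.

Lemma coreM_C0inf (v : spinor R) :
  C0inf v -> (forall x1, v (x1, 0) = 0) -> coreM v.
Proof.
move=> Cv v0; split; first exact: C0inf_schwartz.
split=> [x1|l]; first by rewrite v0 !mxE.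
have [c [C [c0 [C0 hC]]]] := C0inf_exp_decay l Cv.
by exists c, C; do 2 split=> //; move=> x _; exact: hC.
Qed.

End ClosureGraph.

Unset Implicit Arguments.

Theorem proposition4p1 (R : realType) (L b : R) (eta : pt R -> R) :
  1 <= L -> 0 <= b ->
  rsmooth eta ->
  (forall x y : pt R, x.2 = y.2 -> eta x = eta y) ->
  (forall l : seq 'I_2, exists M : R, forall x, `|riter l eta x| <= M) ->
  (forall x, 0 <= eta x <= 1) ->
  closure [set x | eta x != 0] `<=` [set x | 0 <= x.2 /\ Num.sqrt L / 4 < x.2] ->
  forall psi phi : spinor R, Hb_graph b psi phi ->
  exists chi : spinor R,
    Hb_graph b (smul eta psi) chi /\ HbE_graph b (smul eta psi) chi.
Proof.
move=> _ _ se _ hbd _ hsupp psi phi Hpsi.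
have eta_bdry x1 : eta (x1, 0) = 0.
  apply/eqP; apply: contraT => /(subset_closure (A := [set x | eta x != 0])) /hsupp /= [_].
  by rewrite ltNge divr_ge0 ?sqrtr_ge0.
have [K hK] := hbd [::].
have [[K0 hK0] [K1 hK1]] := (hbd [:: ord0], hbd [:: lift ord0 ord0]).
have hG x : \sum_(j < 2) rpartial j eta x ^+ 2 <= K0 ^+ 2 + K1 ^+ 2.
  by rewrite big_ord_recl big_ord1; apply: lerD; apply: sqr_le_normr; [exact: hK0|exact: hK1].
have core_smul u : C0inf u -> C0inf (smul eta u) /\ coreM (smul eta u).
  move=> Cu; have Cv := C0inf_smul se Cu; split; first exact: Cv.
  by apply: coreM_C0inf Cv _ => x1; rewrite /smul eta_bdry scale0r.
have Hchi := closure_graph_smul (core := fun v => C0inf v /\ coreM v) se hK hG core_smul Hpsi.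
exists (smul_dirac eta psi phi); split.
- by apply: closure_graph_sub_core Hchi => u [].
- apply: (closure_graph_sub_core (core := fun v => C0inf v /\ coreM v)) => [u []//|].
  apply: closure_graph_Eset Hchi => u [[su _] _].
  by split; [exact: smeasurable_siter [::] su|exact: smeasurable_dirac].
Qed.
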